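(* Let $t,k,q,r\in\mathbb{N}$. Let $\mathbf{I}_1$ be a $t$-boundaried CSP instance with $t$-boundaried incidence graph $(G,Z)$ such that $G$ admits no $(8^q,k+1)$-separation, and let $(H,J)$ be the $t$-boundaried incidence graph of a $t$-boundaried CSP instance $\mathbf{I}_2$ with $|V(H)|\le r$. Then the incidence graph $G\oplus H$ of $\mathbf{I}_1\oplus\mathbf{I}_2$ has no $(8^q+r,k+1)$-separation.
   Context: The incidence graph of a CSP instance is the bipartite graph on variables and constraints with $x\sim C$ iff $x$ in the scope of $C$. A $t$-boundaried incidence graph $(G,Z)$ is an incidence graph $G$ with a set $Z$ of at most $t$ variable vertices carrying distinct labels in $\{1,\dots,t\}$; a $t$-boundaried CSP instance is the corresponding instance. Gluing $(G,Z)\oplus(H,J)$ takes the disjoint union and identifies boundary vertices with equal labels. A $(q,k)$-separation of an incidence graph $G$ is a partition $(A,S,B)$ of $V(G)$ with $S$ consisting of variable vertices, $N(A),N(B)\subseteq S$, $|S|\le k$, $|A|,|B|\ge q$. *)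

From mathcomp Require Import all_boot.
Set Implicit Arguments. Unset Strict Implicit. Unset Printing Implicit Defensive.

Record csp (D : finType) := CSP {
  cvar : finType;
  ccon : finType;
  cscope : ccon -> seq cvar;
  crel : ccon -> pred (seq D)
}.

Definition ivert D (I : csp D) : finType := (cvar I + ccon I)%type.

Definition iadj D (I : csp D) : rel (ivert I) := fun u v =>
  match u, v with
  | inl x, inr c => x \in cscope c
  | inr c, inl x => x \in cscope c
  | _, _ => false
  end.

Definition is_var D (I : csp D) (v : ivert I) : bool :=
  if v is inl _ then true else false.

Definition nbhd D (I : csp D) (A : {set ivert I}) : {set ivert I} :=
  [set v | (v \notin A) && [exists u in A, iadj u v]].

Definition separation D (I : csp D) (q k : nat) (A S B : {set ivert I}) : Prop :=
  [/\ [&& [disjoint A & S], [disjoint A & B] & [disjoint S & B]],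
      A :|: S :|: B = setT,
      S \subset [set v | is_var v],
      (nbhd A \subset S) && (nbhd B \subset S) &
      [&& #|S| <= k, q <= #|A| & q <= #|B|] ].

Definition has_separation D (I : csp D) (q k : nat) : Prop :=
  exists A S B, @separation D I q k A S B.

(* t-boundaried CSP instance: boundary Z = variables carrying a label;
   labels (in 'I_t, i.e. {0,..,t-1} standing for {1,..,t}) are distinct. *)
Record bcsp (t : nat) (D : finType) := BCSP {
  binst :> csp D;
  blab : cvar binst -> option 'I_t;
  blab_inj : forall x y i, blab x = Some i -> blab y = Some i -> x = y
}.

Section Glue.
Variables (t : nat) (D : finType) (I1 I2 : bcsp t D).

Definition glued_with (x : cvar I2) (y : cvar I1) : bool :=
  (@blab t D I2 x != None) && (@blab t D I1 y == @blab t D I2 x).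

Definition matched (x : cvar I2) : bool := [exists y, glued_with x y].

Definition unmatched2 := {x : cvar I2 | ~~ matched x}.

(* variables of the glued instance: those of I1, plus those of I2 not
   identified with a boundary vertex of I1 *)
Definition gvar : finType := (cvar I1 + unmatched2)%type.

Lemma pick_none_unmatched (x : cvar I2) :
  [pick y | glued_with x y] = None -> ~~ matched x.
Proof.
case: pickP => // H _; apply/existsPn => y; by rewrite H.
Qed.

Definition inj2 (x : cvar I2) : gvar :=
  match [pick y | glued_with x y] as o
        return ([pick y | glued_with x y] = o -> gvar) with
  | Some y => fun _ => inl y
  | None => fun e => inr (exist _ x (pick_none_unmatched e))
  end erefl.

Definition gcon : finType := (ccon I1 + ccon I2)%type.

Definition gscope (c : gcon) : seq gvar :=
  match c with
  | inl c1 => map inl (cscope c1)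
  | inr c2 => map inj2 (cscope c2)
  end.

Definition grel (c : gcon) : pred (seq D) :=
  match c with
  | inl c1 => crel c1
  | inr c2 => crel c2
  end.

Definition glue : csp D := @CSP D gvar gcon gscope grel.
End Glue.

(** A separation of a graph pulls back along an embedding of an induced
    subgraph: the preimages of the three parts are again a separation, with the
    same separator bound, and each side loses at most as many vertices as lie
    outside the image.  The incidence graph [G] of [I1] is an induced subgraph
    of [G (+) H] missing at most [|V(H)|] vertices, so a
    [(8^q + r, k+1)]-separation of [G (+) H] would yield a
    [(8^q, k+1)]-separation of [G]. *)
From mathcomp Require Import all_boot.
From mathcomp Require Import zify.
Set Implicit Arguments. Unset Strict Implicit. Unset Printing Implicit Defensive.

Section Preimset.
Variables (aT rT : finType) (f : aT -> rT).

Lemma disjoint_preimset (A B : {set rT}) :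
  [disjoint A & B] -> [disjoint f @^-1: A & f @^-1: B].
Proof. by rewrite -!setI_eq0 -preimsetI => /eqP ->; rewrite preimset0. Qed.

Lemma imset_preimset (A : {set rT}) : f @: (f @^-1: A) = A :&: f @: [set: aT].
Proof.
apply/setP => y; apply/imsetP/setIP => [[x xA ->]|[yA /imsetP [x _ yx]]].
  by split; [rewrite inE in xA | apply: imset_f].
by exists x; rewrite // inE -yx.
Qed.

Hypothesis f_inj : injective f.

Lemma card_preimset_le (A : {set rT}) : #|f @^-1: A| <= #|A|.
Proof. by rewrite -(card_imset _ f_inj) imset_preimset subset_leq_card ?subsetIl. Qed.

Lemma card_le_preimset (r : nat) (A : {set rT}) :
  #|rT| <= #|aT| + r -> #|A| <= #|f @^-1: A| + r.
Proof.
move=> card_rT.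
have card_image : #|f @: [set: aT]| = #|aT| by rewrite card_imset ?cardsT.
have card_outside := cardsC (f @: [set: aT]).
have A_outside : #|A :\: f @: [set: aT]| <= #|~: f @: [set: aT]|.
  by rewrite setDE subset_leq_card ?subsetIr.
rewrite -(card_imset _ f_inj) imset_preimset -(cardsID (f @: [set: aT]) A).
lia.
Qed.

End Preimset.

Section Pullback.
Variables (D : finType) (I J : csp D) (f : ivert I -> ivert J).
Hypotheses (f_inj : injective f) (f_adj : {homo f : u v / iadj u v})
           (f_var : forall v, is_var (f v) -> is_var v).

Lemma nbhd_preimset (A : {set ivert J}) : nbhd (f @^-1: A) \subset f @^-1: nbhd A.
Proof.
apply/subsetP => v; rewrite !inE => /andP [vNA /existsP [u /andP [uA uv]]].
rewrite inE in uA; rewrite vNA; apply/existsP; exists (f u); by rewrite uA f_adj.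
Qed.

Lemma separation_preimset (q k r : nat) (A S B : {set ivert J}) :
  #|ivert J| <= #|ivert I| + r -> separation (q + r) k A S B ->
  separation q k (f @^-1: A) (f @^-1: S) (f @^-1: B).
Proof.
move=> card_J [/and3P [dAS dAB dSB] cover Svar /andP [NA NB] /and3P [cS cA cB]].
split.
- by rewrite !disjoint_preimset.
- by rewrite -!preimsetU cover preimsetT.
- apply/subsetP => v; rewrite !inE => /(subsetP Svar); rewrite inE; exact: f_var.
- by rewrite !(subset_trans (nbhd_preimset _)) ?preimsetS.
- have cA' := card_le_preimset f_inj A card_J.
  have cB' := card_le_preimset f_inj B card_J.
  have cS' := card_preimset_le f_inj S.
  apply/and3P; split; lia.
Qed.

End Pullback.

Section GlueEmbedding.
Variables (t : nat) (D : finType) (I1 I2 : bcsp t D).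

Definition glue_emb (v : ivert I1) : ivert (glue I1 I2) :=
  match v with inl x => inl (inl x) | inr c => inr (inl c) end.

Lemma glue_emb_inj : injective glue_emb.
Proof. by case=> [x|c] [y|d] //= [->]. Qed.

Lemma glue_emb_adj : {mono glue_emb : u v / iadj u v}.
Proof. by case=> [x|c] [y|d] //=; rewrite mem_map // => a b []. Qed.

Lemma glue_emb_var v : is_var (glue_emb v) = is_var v.
Proof. by case: v. Qed.

Lemma card_ivert_glue : #|ivert (glue I1 I2)| <= #|ivert I1| + #|ivert I2|.
Proof.
have card_unmatched : #|{: unmatched2 I1 I2}| <= #|cvar I2|.
  exact: (@leq_card _ _ val val_inj).
rewrite /ivert /= !card_sum.
apply: leq_trans (leq_add (leq_add (leqnn _) card_unmatched) (leqnn _)) _; lia.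
Qed.

End GlueEmbedding.

Theorem lemma12 (t k q r : nat) (D : finType) (I1 I2 : bcsp t D) :
  ~ has_separation (binst I1) (8 ^ q) k.+1 ->
  #|ivert (binst I2)| <= r ->
  ~ has_separation (glue I1 I2) (8 ^ q + r) k.+1.
Proof.
move=> noSep1 card_I2 [A [S [B sepAB]]]; apply: noSep1.
have card_glue : #|ivert (glue I1 I2)| <= #|ivert I1| + r.
  exact: leq_trans (card_ivert_glue I1 I2) (leq_add (leqnn _) card_I2).
exists (glue_emb I2 @^-1: A), (glue_emb I2 @^-1: S), (glue_emb I2 @^-1: B).
apply: separation_preimset card_glue sepAB.
- exact: glue_emb_inj.
- exact: mono2W (glue_emb_adj I2).
- by move=> v; rewrite glue_emb_var.
Qed.
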